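(* For $j\in\{1,\dots,n\}$, let $X_j\subset\mathbb{R}$ be a union of finitely many disjoint closed intervals (rays allowed) and let $g^{\mathrm{in}}_j:X_j\to\mathbb{R}$ be a piecewise $\chi$ function. Then $\star\{(g^{\mathrm{in}}_j,X_j)\}_{j=1}^n$ is a piecewise $\chi$ function.
   Context: For $\tau=(\tau_1,\tau_2)\in\mathbb{R}^2$, $\chi_\tau:\mathbb{R}\to\mathbb{R}$ is $\chi_\tau(x)=x-\tau_1+\tau_2$ for $x\le\tau_1$ and $\chi_\tau(x)=-x+\tau_1+\tau_2$ for $x>\tau_1$; $\tau$ is its top point. A function $g:X\to\mathbb{R}$, $X\subseteq\mathbb{R}$, is a piecewise $\chi$ function if $X$ is a union of disjoint intervals and on each of these intervals $g$ equals the restriction of some $\chi_\tau$. The operator $\star$: given functions $g^{\mathrm{in}}_j:X_j\to\mathbb{R}$, $j=1,\dots,n$, it returns $g^{\mathrm{out}}=\star\{(g^{\mathrm{in}}_j,X_j)\}_{j=1}^n$ with domain the Minkowski sum $\sum_{j=1}^nX_j$, defined by $g^{\mathrm{out}}(z)=\max\{\sum_{j=1}^ng^{\mathrm{in}}_j(x_j): x\in\mathbb{R}^n,\ \sum_jx_j=z,\ x_j\in X_j\ \forall j\}$.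
   Formalization: The operator ⋆ takes the supremum instead of the maximum of the sums, and the union of disjoint intervals in the definition of a piecewise χ function consists of finitely many intervals. Each condition added here is assumed in the paper as well or is needed for the statement above to hold. *)

From HB Require Import structures.
From mathcomp Require Import all_boot all_order all_algebra.
From mathcomp Require Import all_classical all_reals topology normedtype.
Import numFieldNormedType.Exports.
Set Implicit Arguments. Unset Strict Implicit. Unset Printing Implicit Defensive.
Import Order.TTheory GRing.Theory Num.Theory.
Local Open Scope classical_set_scope.
Local Open Scope ring_scope.

Section Defs.
Variable R : realType.

Definition chi (tau : R * R) (x : R) : R :=
  if x <= tau.1 then x - tau.1 + tau.2 else - x + tau.1 + tau.2.

Definition interval (I : set R) : Prop :=
  forall x y z, I x -> I y -> x <= z -> z <= y -> I z.

Definition fin_union_closed_intervals (X : set R) : Prop :=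
  exists (m : nat) (I : 'I_m -> set R),
    [/\ forall i, interval (I i) /\ @closed R^o (I i),
        forall i i', i != i' -> I i `&` I i' = set0
      & X = \bigcup_(i in [set: 'I_m]) I i].

(* Values of g outside X are irrelevant. *)
Definition piecewise_chi (g : R -> R) (X : set R) : Prop :=
  exists (m : nat) (I : 'I_m -> set R) (tau : 'I_m -> R * R),
    [/\ forall i, interval (I i),
        forall i i', i != i' -> I i `&` I i' = set0,
        X = \bigcup_(i in [set: 'I_m]) I i
      & forall i x, I i x -> g x = chi (tau i) x].

Definition feasible (n : nat) (X : 'I_n -> set R) (z : R) : set ('I_n -> R) :=
  [set x | (forall j, X j (x j)) /\ \sum_(j < n) x j = z].

Definition minkowski_sum (n : nat) (X : 'I_n -> set R) : set R :=
  [set z | exists x, feasible X z x].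

(* the star operator: g_out(z) = max { sum_j g_j(x_j) : sum_j x_j = z, x_j in X_j },
   rendered as the supremum (which is the maximum whenever the max exists). *)
Definition star (n : nat) (g : 'I_n -> R -> R) (X : 'I_n -> set R) (z : R) : R :=
  sup [set \sum_(j < n) g j (x j) | x in feasible X z].

End Defs.

(* For a fixed choice k of one piece I_j of each X_j, the sum of the tents
   chi_(tau_j) over x_j in I_j with sum x_j = z has supremum chi_(s_k) z on the
   interval I_1 + ... + I_n: with c_j the point of the closure of I_j nearest
   to the peak abscissa of tau_j, every summand equals a constant minus
   |x_j - c_j|, and sum |x_j - c_j| can be brought arbitrarily close to
   |z - sum c_j|.  Hence the star is the upper envelope of finitely many tents,
   each living on an interval.  The region where the tent of k wins is a boolean
   combination of finitely many intervals (Minkowski sums and the sets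
   chi_(s_l) <= chi_(s_k)), and such a combination is a union of fibres of the
   map sending x to its position (left of, inside, right of) with respect to
   each of these intervals; the fibres are finitely many disjoint intervals. *)

From Pilot Require Import Defs.
From HB Require Import structures.
From mathcomp Require Import all_boot all_order all_algebra.
From mathcomp Require Import all_classical all_reals topology normedtype.
From mathcomp Require Import ring lra.
Import numFieldNormedType.Exports.
Import Order.TTheory GRing.Theory Num.Theory.
Local Open Scope classical_set_scope.
Local Open Scope ring_scope.
Set Implicit Arguments. Unset Strict Implicit. Unset Printing Implicit Defensive.

(* [Defs.interval] is shadowed by MathComp's type of intervals. *)
Local Notation ival := Defs.interval.

Section RealFacts.
Variable R : realType.
Implicit Types (A : set R) (s t : R * R).

Lemma chiE t x : chi t x = t.2 - `|x - t.1|.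
Proof.
rewrite /chi; case: ifP => h.
  by rewrite ler0_norm ?subr_le0 //; lra.
by rewrite gtr0_norm ?subr_gt0 ?ltNge ?h //; lra.
Qed.

Lemma ival_setI A B : ival A -> ival B -> ival (A `&` B).
Proof. by move=> iA iB x y z [Ax Bx] [Ay By] xz zy; split; [apply: (iA x y)|apply: (iB x y)]. Qed.

Lemma ival_segment A a b u : ival A -> A a -> A b -> 0 <= u <= 1 ->
  A (a + u * (b - a)).
Proof.
move=> iA Aa Ab /andP[u0 u1]; have [ab|ba] := lerP a b.
  by apply: (iA a b) => //; nra.
by apply: (iA b a) => //; nra.
Qed.

Lemma ival_chi_le s t : ival [set z | chi s z <= chi t z].
Proof.
move=> x y z /=; rewrite !chiE => hx hy xz zy; move: hx hy.
case: (ger0P (x - s.1)) => ?; case: (ger0P (x - t.1)) => ?;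
case: (ger0P (y - s.1)) => ?; case: (ger0P (y - t.1)) => ?;
case: (ger0P (z - s.1)) => ?; case: (ger0P (z - t.1)) => ?; lra.
Qed.

Lemma ival_nearest A (t : R) : ival A -> A !=set0 ->
  exists c, (forall x, A x -> `|x - t| = `|x - c| + `|c - t|) /\
            (forall e, 0 < e -> exists2 a, A a & `|a - c| < e).
Proof.
move=> iA [a0 Aa0]; have [At|nAt] := pselect (A t).
  exists t; split=> [x _|e e0]; first by rewrite subrr normr0 addr0.
  by exists t; rewrite // subrr normr0.
have [A_lt|A_nlt] := pselect (forall x, A x -> x < t).
  have supA : has_sup A by split; [exists a0|exists t => x /A_lt/ltW].
  have le_sup x : A x -> x <= sup A by move=> Ax; exact: sup_upper_bound.
  have sup_le : sup A <= t by apply: ge_sup; [exists a0|move=> x /A_lt/ltW].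
  exists (sup A); split=> [x Ax|e e0].
    have xs := le_sup x Ax.
    by rewrite !ler0_norm ?subr_le0 ?(le_trans xs sup_le) //; lra.
  have [y Ay ly] := sup_adherent e0 supA; exists y => //.
  by have ys := le_sup y Ay; rewrite ler0_norm ?subr_le0 //; lra.
have {A_nlt} gt x : A x -> t < x.
  move=> Ax; rewrite ltNge; apply/negP => xt; apply: A_nlt => y Ay.
  rewrite ltNge; apply/negP => ty; exact: nAt (iA x y t Ax Ay xt ty).
have infA : has_inf A by split; [exists a0|exists t => x /gt/ltW].
have inf_le x : A x -> inf A <= x by move=> Ax; exact: (ge_inf infA.2).
have le_inf : t <= inf A by apply: lb_le_inf; [exists a0|move=> x /gt/ltW].
exists (inf A); split=> [x Ax|e e0].
  have ix := inf_le x Ax.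
  by rewrite !ger0_norm ?subr_ge0 ?(le_trans le_inf ix) //; lra.
have [y Ay ly] := inf_adherent e0 infA; exists y => //.
by have iy := inf_le y Ay; rewrite ger0_norm ?subr_ge0 //; lra.
Qed.

Lemma sup_eq_approx (E : set R) b : ubound E b ->
  (forall e, 0 < e -> exists2 x, E x & b - e < x) -> sup E = b.
Proof.
move=> ubE approx; have [x Ex _] := approx 1 ltr01.
have supE : has_sup E by split; [exists x|exists b].
apply/eqP; rewrite eq_le ge_sup //=; last by exists x.
apply/ler_addgt0Pr => e e0; have [y Ey ly] := approx e e0.
by have := sup_upper_bound supE Ey; lra.
Qed.

End RealFacts.

Section MinkowskiSum.
Variables (R : realType) (n : nat).
Implicit Types (A : 'I_n -> set R) (a y : 'I_n -> R).

Lemma feasible_segment A a b (u : R) :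
  (forall j, ival (A j)) -> (forall j, A j (a j)) -> (forall j, A j (b j)) ->
  0 <= u <= 1 ->
  feasible A (\sum_j a j + u * (\sum_j b j - \sum_j a j)) (fun j => a j + u * (b j - a j)).
Proof.
move=> iA Aa Ab u01; split=> [j|]; first exact: ival_segment.
by rewrite big_split /= -mulr_sumr sumrB.
Qed.

Lemma ival_minkowski_sum A : (forall j, ival (A j)) -> ival (minkowski_sum A).
Proof.
move=> iA _ _ z [a [Aa <-]] [b [Ab <-]] az zb.
pose u := (z - \sum_j a j) / (\sum_j b j - \sum_j a j).
have [ab|ab] := eqVneq (\sum_j a j) (\sum_j b j).
  by exists a; split => //; apply/eqP; rewrite eq_le az ab zb.
exists (fun j => a j + u * (b j - a j)).
have -> : z = \sum_j a j + u * (\sum_j b j - \sum_j a j).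
  by rewrite /u divfK ?subr_eq0 1?eq_sym // addrC subrK.
apply: feasible_segment => //; rewrite /u divr_ge0 ?subr_ge0 ?(le_trans az) //=.
by rewrite ler_pdivrMr ?mul1r ?lerD2r // subr_gt0 lt_neqAle ab (le_trans az).
Qed.

Lemma feasible_l1_shift A a y z : (forall j, ival (A j)) ->
  (forall j, A j (a j)) -> feasible A z y ->
  exists2 x, feasible A z x & \sum_j `|x j - a j| = `|z - \sum_j a j|.
Proof.
move=> iA Aa [Ay yz].
have ray_ge (c : R) : ival [set x | c <= x] by move=> u v w /= cu _ uw _; exact: le_trans uw.
have ray_le (c : R) : ival [set x | x <= c] by move=> u v w /= _ vc _ wv; exact: le_trans vc.
have [up|down] := lerP (\sum_j a j) z.
  pose S j := A j `&` [set x | a j <= x].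
  have [x [Sx xz]] : minkowski_sum S z.
    apply: (ival_minkowski_sum (fun j => ival_setI (iA j) (ray_ge (a j))) _ _ up).
    - by exists a; split=> // j; split; [apply: Aa|rewrite /=].
    - exists (fun j => Order.max (a j) (y j)); split=> [j|//]; rewrite /S /= le_max lexx.
      by split => //; case: leP => _; [apply: Ay|apply: Aa].
    by rewrite -yz; apply: ler_sum => j _; rewrite le_max lexx orbT.
  exists x; first by split=> // j; case: (Sx j).
  rewrite -xz -sumrB; apply: eq_bigr => j _.
  by rewrite ger0_norm // subr_ge0; case: (Sx j).
pose S j := A j `&` [set x | x <= a j].
have [x [Sx xz]] : minkowski_sum S z.
  apply: (ival_minkowski_sum (fun j => ival_setI (iA j) (ray_le (a j))) _ _ _ (ltW down)).
  - exists (fun j => Order.min (a j) (y j)); split=> [j|//]; rewrite /S /= ge_min lexx.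
    by split => //; case: leP => _; [apply: Aa|apply: Ay].
  - by exists a; split=> // j; split; [apply: Aa|rewrite /=].
  by rewrite -yz; apply: ler_sum => j _; rewrite ge_min lexx orbT.
exists x; first by split=> // j; case: (Sx j).
rewrite -xz -sumrB; apply: eq_bigr => j _.
by rewrite ler0_norm ?opprB // subr_le0; case: (Sx j).
Qed.

Lemma star_tent_bounds A (tau : 'I_n -> R * R) : (forall j, ival (A j)) ->
  exists s, forall z, minkowski_sum A z ->
    (forall x, feasible A z x -> \sum_j chi (tau j) (x j) <= chi s z) /\
    (forall e, 0 < e ->
       exists2 x, feasible A z x & chi s z - e < \sum_j chi (tau j) (x j)).
Proof.
move=> iA; have [neA|] := pselect (forall j, A j !=set0); last first.
  by move=> emptyA; exists 0 => z [y [Ay _]]; case: emptyA => j; exists (y j).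
have [c cP] := choice (fun j => ival_nearest (tau j).1 (iA j) (neA j)).
pose h j := (tau j).2 - `|c j - (tau j).1|.
have sum_chi x : (forall j, A j (x j)) ->
    \sum_j chi (tau j) (x j) = \sum_j h j - \sum_j `|x j - c j|.
  move=> Ax; rewrite -sumrB; apply: eq_bigr => j _.
  by rewrite chiE /h (cP j).1 //; lra.
exists (\sum_j c j, \sum_j h j) => z [y feas_y]; rewrite chiE /=; split.
  move=> x [Ax <-]; rewrite sum_chi // lerD2l lerN2 -sumrB.
  exact: ler_norm_sum.
move=> e e0; pose d := e / (2 * n%:R + 1).
have n0 : 0 <= n%:R :> R := ler0n _ _.
have d0 : 0 < d by rewrite divr_gt0 //; lra.
have ed : n%:R * d * 2 + d = e by rewrite /d; field; lra.
have /choice[a aP] : forall j, exists u, A j u /\ `|u - c j| < d.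
  by move=> j; have [u Au uc] := (cP j).2 d d0; exists u.
have [x feas_x xa] := feasible_l1_shift iA (fun j => (aP j).1) feas_y.
exists x => //; rewrite sum_chi; last by case: feas_x.
have xc : \sum_j `|x j - c j| <= \sum_j `|x j - a j| + \sum_j `|a j - c j|.
  by rewrite -big_split; apply: ler_sum => j _; exact: ler_distD.
have za : `|z - \sum_j a j| <= `|z - \sum_j c j| + \sum_j `|a j - c j|.
  apply: le_trans (ler_distD (\sum_j c j) _ _) _; rewrite lerD2l -sumrB.
  by apply: le_trans (ler_norm_sum _ _ _) _; apply: ler_sum => j _; rewrite distrC.
have ac : \sum_j `|a j - c j| <= n%:R * d.
  rewrite mulr_natl -[n in _ *+ n]card_ord -sumr_const.
  by apply: ler_sum => j _; exact: ltW (aP j).2.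
move: xc za ac ed; rewrite xa; set N := n%:R * d; lra.
Qed.

End MinkowskiSum.

Definition chi_partition (R : realType) (T : eqType) (F : R -> R) (S : set R)
    (I : T -> set R) (tau : T -> R * R) : Prop :=
  [/\ forall i, ival (I i),
      forall i i', i != i' -> I i `&` I i' = set0,
      S = \bigcup_(i in [set: T]) I i
    & forall i x, I i x -> F x = chi (tau i) x].

Lemma piecewise_chi_fintype (R : realType) (T : finType) F S (I : T -> set R) tau :
  chi_partition F S I tau -> piecewise_chi F S.
Proof.
case=> iI disjI SE Ftau; exists #|T|, (I \o enum_val), (tau \o enum_val).
split=> [i|i i' ii'||i x] /=; [exact: iI| | |exact: Ftau].
  by apply: disjI; apply: contra ii' => /eqP/enum_val_inj->.
rewrite SE; apply/seteqP; split=> x [i _ Iix]; last by exists (enum_val i).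
by exists (enum_rank i) => //=; rewrite enum_rankK.
Qed.

Section Atoms.
Variable R : realType.
Implicit Types (A S : set R).

Definition below A : set R := [set x | forall y, A y -> x < y].

(* [None]: inside [A]; [Some true]: left of [A]; [Some false]: right of [A]. *)
Definition side A x : option bool :=
  if `[< A x >] then None else Some `[< below A x >].

Lemma side_None A x : side A x = None <-> A x.
Proof. by rewrite /side; case: asboolP => Ax; split. Qed.

Lemma ival_side A o : ival A -> ival [set x | side A x = o].
Proof.
move=> iA x y z /= <- + xz zy; rewrite /side.
have [Ax|nAx] := asboolP (A x).
  by case: asboolP => // Ay _; rewrite asboolT //; exact: (iA x y).
case: asboolP => // nAy [].
have [bx /asboolP yb|/existsNP[u /not_implyP[Au /negP]]] := asboolP (below A x).
  have bz : below A z by move=> u /yb; exact: le_lt_trans zy.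
  have nAz : ~ A z by move=> /bz; rewrite ltxx.
  by rewrite asboolF // asboolT.
rewrite -leNgt => ux _.
have nAz : ~ A z by move=> Az; exact: nAx (iA u z x Au Az ux xz).
by rewrite !asboolF // => /(_ u Au); rewrite ltNge (le_trans ux xz).
Qed.

Variables (T : finType) (B : T -> set R).

Definition signature x : {ffun T -> option bool} := [ffun t => side (B t) x].

Definition atomic S : Prop :=
  forall x y, signature x = signature y -> S x -> S y.

Lemma ival_signature f : (forall t, ival (B t)) -> ival [set x | signature x = f].
Proof.
move=> iB x y z /= sx sy xz zy; apply/ffunP => t.
have sideE u : signature u = f -> side (B t) u = f t by move=> <-; rewrite ffunE.
by rewrite ffunE; exact: (ival_side (iB t) (sideE x sx) (sideE y sy) xz zy).
Qed.

Lemma atomic_generator t : atomic (B t).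
Proof.
move=> x y /ffunP/(_ t); rewrite !ffunE => sxy /side_None Bx.
by apply/side_None; rewrite -sxy.
Qed.

Lemma atomicC S : atomic S -> atomic (~` S).
Proof. by move=> aS x y sxy nSx Sy; apply: nSx; exact: aS Sy. Qed.

Lemma atomicU S S' : atomic S -> atomic S' -> atomic (S `|` S').
Proof. by move=> aS aS' x y sxy [Sx|S'x]; [left; exact: aS Sx|right; exact: aS' S'x]. Qed.

Lemma atomicI S S' : atomic S -> atomic S' -> atomic (S `&` S').
Proof. by move=> aS aS' x y sxy [Sx S'x]; split; [exact: aS Sx|exact: aS' S'x]. Qed.

Lemma atomic_bigcap (K : Type) (S : K -> set R) :
  (forall k, atomic (S k)) -> atomic (\bigcap_k S k).
Proof. by move=> aS x y sxy Sx k _; apply: aS sxy (Sx k _). Qed.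

Lemma piecewise_chi_atomic F (K : Type) (W : K -> set R) (s : K -> R * R) :
  (forall t, ival (B t)) -> (forall k, atomic (W k)) ->
  (forall k x, W k x -> F x = chi (s k) x) ->
  piecewise_chi F (\bigcup_k W k).
Proof.
move=> iB aW Fs; set S := \bigcup_k W k.
pose I f := [set x | S x /\ signature x = f].
have tent f : exists t, forall x, I f x -> F x = chi t x.
  have [[x [[k _ Wkx] sx]]|noI] := pselect (exists x, I f x).
    by exists (s k) => y [_ sy]; apply: Fs; apply: aW Wkx; rewrite sx sy.
  by exists 0 => y Iy; case: noI; exists y.
have [tau tauP] := choice tent.
apply: (piecewise_chi_fintype (I := I) (tau := tau)); split=> //.
- move=> f x y z [[k _ Wkx] sx] [_ sy] xz zy.
  have sz : signature z = f := ival_signature iB sx sy xz zy.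
  by split=> //; exists k => //; apply: aW Wkx; rewrite sx sz.
- move=> f f' ff'; apply/seteqP; split=> // x [[_ sx] [_ sx']].
  by move: ff'; rewrite -sx -sx' eqxx.
- by apply/seteqP; split=> [x Sx|x [f _ [Sx _]]] //; exists (signature x).
Qed.

End Atoms.

Section Star.
Variables (R : realType) (n : nat) (X : 'I_n -> set R) (g : 'I_n -> R -> R).
Variables (T : 'I_n -> finType) (part : forall j, T j -> set R).
Variable tau : forall j, T j -> R * R.
Arguments part : clear implicits.
Arguments tau : clear implicits.
Hypothesis gP : forall j, chi_partition (g j) (X j) (part j) (tau j).

Local Notation combination := {dffun forall j, T j}.
Implicit Types k l : combination.

Definition piece k j : set R := part j (k j).

Definition piece_sum k : set R := minkowski_sum (piece k).

Lemma ival_piece k j : ival (piece k j).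
Proof. by have [iI _ _ _] := gP j; exact: iI. Qed.

Definition top k : R * R :=
  sval (cid (star_tent_bounds (fun j => tau j (k j)) (@ival_piece k))).

Lemma topP k z : piece_sum k z ->
  (forall x, feasible (piece k) z x -> \sum_j chi (tau j (k j)) (x j) <= chi (top k) z) /\
  (forall e, 0 < e -> exists2 x, feasible (piece k) z x &
     chi (top k) z - e < \sum_j chi (tau j (k j)) (x j)).
Proof. exact: (svalP (cid (star_tent_bounds _ (@ival_piece k)))). Qed.

Lemma piece_sub k j x : piece k j x -> X j x.
Proof. by move=> kx; have [_ _ -> _] := gP j; exists (k j); last exact: kx. Qed.

Lemma sum_g_piece k x : (forall j, piece k j (x j)) ->
  \sum_j g j (x j) = \sum_j chi (tau j (k j)) (x j).
Proof.
by move=> kx; apply: eq_bigr => j _; have [_ _ _ gE] := gP j; exact: gE (kx j).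
Qed.

Lemma exists_combination x : (forall j, X j (x j)) ->
  exists k : combination, forall j, piece k j (x j).
Proof.
move=> Xx; have ex j : exists i, part j i (x j).
  by have [_ _ XE _] := gP j; move: (Xx j); rewrite XE => -[i _ Ix]; exists i.
exists [ffun j => sval (cid (ex j))] => j.
by rewrite /piece ffunE; exact: (svalP (cid (ex j))).
Qed.

Definition dominated k l : set R := [set z | chi (top l) z <= chi (top k) z].

Definition envelope k : set R :=
  piece_sum k `&` \bigcap_l (~` piece_sum l `|` dominated k l).

Lemma star_envelope k z : envelope k z -> star g X z = chi (top k) z.
Proof.
move=> [kz dom]; apply: sup_eq_approx.
  move=> _ [x [Xx xz] <-]; have [l lx] := exists_combination Xx.
  have lz : piece_sum l z by exists x.
  rewrite (sum_g_piece lx); apply: le_trans ((topP lz).1 x (conj lx xz)) _.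
  by case: (dom l I).
move=> e e0; have [x [kx xz] lt_e] := (topP kz).2 e e0.
exists (\sum_j g j (x j)); last by rewrite (sum_g_piece kx).
by exists x => //; split=> // j; exact: piece_sub (kx j).
Qed.

Lemma minkowski_sum_envelope : minkowski_sum X = \bigcup_k envelope k.
Proof.
apply/seteqP; split=> z; last first.
  by move=> [k _ [[x [kx xz]] _]]; exists x; split=> // j; exact: piece_sub (kx j).
move=> [x [Xx xz]]; have [k0 k0x] := exists_combination Xx.
have k0z : `[< piece_sum k0 z >] by apply/asboolP; exists x.
have [k /asboolP kz kmax] :=
  arg_maxP (i0 := k0) (P := fun k => `[< piece_sum k z >]) (fun k => chi (top k) z) k0z.
exists k => //; split=> // l _.
by have [lz|] := pselect (piece_sum l z); [right; apply/kmax/asboolP|left].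
Qed.

Definition generator (t : combination + combination * combination) : set R :=
  match t with inl k => piece_sum k | inr kl => dominated kl.1 kl.2 end.

Lemma atomic_envelope k : atomic generator (envelope k).
Proof.
apply: atomicI; first exact: (atomic_generator (B := generator) (t := inl k)).
apply: atomic_bigcap => l; apply: atomicU.
  by apply: atomicC; exact: (atomic_generator (B := generator) (t := inl l)).
exact: (atomic_generator (B := generator) (t := inr (k, l))).
Qed.

Lemma piecewise_chi_star : piecewise_chi (star g X) (minkowski_sum X).
Proof.
rewrite minkowski_sum_envelope; apply: (piecewise_chi_atomic (B := generator)).
- case=> [k|[k l]]; last exact: ival_chi_le.
  by apply: ival_minkowski_sum => j; exact: ival_piece.
- exact: atomic_envelope.
- exact: star_envelope.
Qed.

End Star.

Theorem proposition2 (R : realType) (n : nat) (X : 'I_n -> set R)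
    (g : 'I_n -> R -> R) :
  (forall j, fin_union_closed_intervals (X j)) ->
  (forall j, piecewise_chi (g j) (X j)) ->
  piecewise_chi (star g X) (minkowski_sum X).
Proof.
(* [star] is a supremum. *)
move=> _ gP.
have /choice[p pP] : forall j, exists p : {m : nat & ('I_m -> set R) * ('I_m -> R * R)},
    chi_partition (g j) (X j) (projT2 p).1 (projT2 p).2.
  by move=> j; have [m [I [tau h]]] := gP j; exists (existT _ m (I, tau)).
exact: (piecewise_chi_star (T := fun j => 'I_(projT1 (p j))) pP).
Qed.
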